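(* Let $\{A_n\}_{n\ge 0}$ be determined by $A_0=A_1=1$ and $(n+1)A_{n+1}=2(n+1)A_n+3(n-1)A_{n-1}$ for $n\ge 1$ (the numbers of directed animals of size $n$). Then $\{A_n\}_{n\ge 0}$ is log-convex.
   Context: A sequence $a_0,a_1,\ldots$ of nonnegative real numbers is log-convex if $a_{k-1}a_{k+1}\ge a_k^2$ for all $k\ge 1$. *)

From mathcomp Require Import all_boot all_order all_algebra.
Set Implicit Arguments. Unset Strict Implicit. Unset Printing Implicit Defensive.
Import Order.TTheory GRing.Theory Num.Theory.
Local Open Scope ring_scope.

Definition log_convex (R : realFieldType) (a : nat -> R) : Prop :=
  (forall k, 0 <= a k) /\
  (forall k : nat, (1 <= k)%N -> a k.-1 * a k.+1 >= a k ^+ 2).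

From mathcomp Require Import all_boot all_order all_algebra.
From mathcomp Require Import ring lra.
Set Implicit Arguments. Unset Strict Implicit. Unset Printing Implicit Defensive.
Import Order.TTheory GRing.Theory Num.Theory.
Local Open Scope ring_scope.

(* The ratio A_{n+1}/A_n is trapped in [6n/(2n+1), (6n+3)/(2n+2)] for n >= 1:
   each bound propagates to the next index thanks to the other one.  The upper
   bound makes the log-convexity defect (n+2)(A_n A_{n+2} - A_{n+1}^2) an
   explicit sum of nonnegative terms. *)

Section DirectedAnimals.

Variable R : realFieldType.
Variable A : nat -> R.

Hypothesis A_rec : forall n : nat,
  n.+2%:R * A n.+2 = 2 * n.+2%:R * A n.+1 + 3 * n%:R * A n.

Definition ratio_bounds (n : nat) : Prop :=
  [/\ 0 < A n,
      6 * n%:R * A n <= (2 * n%:R + 1) * A n.+1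
    & (2 * n%:R + 2) * A n.+1 <= (6 * n%:R + 3) * A n].

Lemma ratio_bounds_gt0_succ (n : nat) :
  ratio_bounds n -> (1 <= n)%N -> 0 < A n.+1.
Proof.
move=> [a_gt0 lo _] n_ge1.
have x_ge1 : (1 : R) <= n%:R by rewrite ler1n.
have : 0 < (2 * n%:R + 1) * A n.+1.
  by apply: lt_le_trans lo; rewrite !pmulr_rgt0 //; lra.
by rewrite pmulr_rgt0 //; lra.
Qed.

Lemma ratio_bounds_succ (n : nat) :
  ratio_bounds n -> (1 <= n)%N -> ratio_bounds n.+1.
Proof.
move=> rb n_ge1; have b_gt0 := ratio_bounds_gt0_succ rb n_ge1.
case: rb => a_gt0 lo hi.
have rec := A_rec n; rewrite -(@natr1 R n.+1) -(@natr1 R n) in rec.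
have x_ge1 : (1 : R) <= n%:R by rewrite ler1n.
rewrite /ratio_bounds -(@natr1 R n).
move: a_gt0 b_gt0 lo hi rec.
set x := n%:R; set a := A n; set b := A n.+1; set c := A n.+2.
move=> a_gt0 b_gt0 lo hi rec.
split => //.
- have b_le3a : b <= 3 * a.
    by rewrite -(ler_pM2l (_ : 0 < 2 * x + 2)); lra.
  have : 0 <= (x + 2) * ((2 * (x + 1) + 1) * c - 6 * (x + 1) * b).
    have -> : (x + 2) * ((2 * (x + 1) + 1) * c - 6 * (x + 1) * b) =
        (2 * x + 3) * ((x + 1 + 1) * c) - 6 * (x + 1) * (x + 2) * b by ring.
    (* After the recurrence this is n (3 (2n+3) a - 2 (n+2) b). *)
    rewrite rec; nra.
  by rewrite pmulr_rge0 ?subr_ge0 //; lra.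
- (* twice the recurrence plus the lower bound *)
  nra.
Qed.

Lemma ratio_bounds_ge1 (n : nat) :
  ratio_bounds 1 -> (1 <= n)%N -> ratio_bounds n.
Proof.
move=> rb1; elim: n => [//|[|n] IH] _ //.
exact: ratio_bounds_succ (IH isT) isT.
Qed.

Lemma ratio_bounds_log_convex (n : nat) :
  ratio_bounds n -> (1 <= n)%N -> A n.+1 ^+ 2 <= A n * A n.+2.
Proof.
move=> rb n_ge1; have b_gt0 := ratio_bounds_gt0_succ rb n_ge1.
case: rb => a_gt0 _ hi.
have rec := A_rec n; rewrite -(@natr1 R n.+1) -(@natr1 R n) in rec.
have x_ge1 : (1 : R) <= n%:R by rewrite ler1n.
move: a_gt0 b_gt0 hi rec.
set x := n%:R; set a := A n; set b := A n.+1; set c := A n.+2.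
move=> a_gt0 b_gt0 hi rec.
set P := (6 * x + 3) * a - (2 * x + 2) * b.
have P_ge0 : 0 <= P by rewrite subr_ge0.
have defect : (2 * x + 2) ^+ 2 * ((x + 2) * (a * c - b ^+ 2)) =
    (2 * x + 2) * (x + 2) * b * P + (x + 2) * (2 * x - 1) * a * P
    + 3 * (5 * x + 2) * a ^+ 2.
  have -> : (x + 2) * (a * c - b ^+ 2) = a * ((x + 1 + 1) * c) - (x + 2) * b ^+ 2.
    by ring.
  by rewrite rec /P; ring.
have : 0 <= (2 * x + 2) ^+ 2 * ((x + 2) * (a * c - b ^+ 2)).
  rewrite defect; apply: addr_ge0; [apply: addr_ge0|].
  - by apply: mulr_ge0 => //; apply: mulr_ge0; [nra | exact: ltW].
  - by apply: mulr_ge0 => //; apply: mulr_ge0; [nra | exact: ltW].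
  - by apply: mulr_ge0; [lra | exact: sqr_ge0].
by rewrite !pmulr_rge0 ?subr_ge0 //; [lra | apply: exprn_gt0; lra].
Qed.

End DirectedAnimals.

Theorem corollary3p7 (A : nat -> rat) :
  A 0%N = 1 -> A 1%N = 1 ->
  (forall n : nat, (1 <= n)%N ->
     (n.+1)%:R * A n.+1 = 2 * (n.+1)%:R * A n + 3 * (n.-1)%:R * A n.-1) ->
  log_convex A.
Proof.
move=> A0 A1 hrec.
have A_rec n : n.+2%:R * A n.+2 = 2 * n.+2%:R * A n.+1 + 3 * n%:R * A n.
  exact: hrec n.+1 isT.
have A2 : A 2%N = 2.
  by have := A_rec 0%N; rewrite A1 mulr0 mul0r addr0 mulr1; lra.
have rb1 : ratio_bounds A 1 by split; rewrite /= ?A1 ?A2; lra.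
have rb := ratio_bounds_ge1 A_rec rb1.
split.
- case=> [|k]; first by rewrite A0.
  by case: (rb k.+1 isT) => /ltW.
- case=> [//|[|k]] _ /=; first by rewrite A0 A1 A2; lra.
  exact: (ratio_bounds_log_convex A_rec (rb k.+1 isT) isT).
Qed.
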